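(* Let $d\ge1$ and $L\ge2$ be integers, $\Phi\in\mathbb{R}^{d\times d}$, and $W_1,\dots,W_L\in\mathbb{R}^{d\times d}$, with $\mathcal{R}=\tfrac12\|W_{L:1}-\Phi\|_F^2$. Suppose $\|W_l\|_2\le\alpha$ for $l=1,\dots,L-1$ and $\|W_L\|_2\le\beta$, where $\alpha,\beta\ge0$ and, for some $\phi>0$, $1\le\alpha^{2(L-1)}<L\phi^2$ and $\alpha^{2(L-1)}\beta^2<2\phi^2$. For $\eta>0$ let $W_l^+=W_l-\eta\nabla_l\mathcal{R}$, $l=1,\dots,L$, and let $D_l=W_{l+1}^\intercal W_{l+1}-W_lW_l^\intercal$, $D_l^+=(W_{l+1}^+)^\intercal W_{l+1}^+-W_l^+(W_l^+)^\intercal$ for $l=1,\dots,L-1$. Then $$\|D_l^+-D_l\|_2\le8\eta^2\phi^2\mathcal{R}\quad(l=1,\dots,L-2),\qquad\|D_{L-1}^+-D_{L-1}\|_2\le2\eta^2(L+2)\phi^2\mathcal{R}.$$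
   Context: For $l_2\ge l_1$ write $W_{l_2:l_1}=W_{l_2}\cdots W_{l_1}$, empty products being the identity $I$. $\nabla_l\mathcal{R}=W_{L:l+1}^\intercal(W_{L:1}-\Phi)W_{l-1:1}^\intercal$ is the gradient of $\mathcal{R}(W_1,\dots,W_L)=\tfrac12\|W_L\cdots W_1-\Phi\|_F^2$ with respect to $W_l$, evaluated at $(W_1,\dots,W_L)$. $\|\cdot\|_2$ is the spectral norm and $\|\cdot\|_F$ the Frobenius norm. *)

From HB Require Import structures.
From mathcomp Require Import all_boot all_order all_algebra.
From mathcomp Require Import all_classical all_reals.
Set Implicit Arguments. Unset Strict Implicit. Unset Printing Implicit Defensive.
Import Order.TTheory GRing.Theory Num.Theory.
Local Open Scope ring_scope.
Local Open Scope classical_set_scope.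

Section Defs.
Variable R : realType.

Definition vnorm n (v : 'cV[R]_n) : R := Num.sqrt (\sum_i (v i 0) ^+ 2).

Definition specnorm m n (A : 'M[R]_(m, n)) : R :=
  sup [set vnorm (A *m v) | v in [set v : 'cV[R]_n | vnorm v = 1]].

Definition frob2 m n (A : 'M[R]_(m, n)) : R := \sum_i \sum_j (A i j) ^+ 2.

(* W_{hi:lo} = W hi * W (hi-1) * ... * W lo ; identity if hi < lo *)
Definition prodW d (W : nat -> 'M[R]_d) (hi lo : nat) : 'M[R]_d :=
  foldr (fun i acc => W i *m acc) 1%:M (rev (iota lo (hi.+1 - lo))).

Definition risk d (L : nat) (Phi : 'M[R]_d) (W : nat -> 'M[R]_d) : R :=
  frob2 (prodW W L 1 - Phi) / 2.

(* gradient of the risk with respect to W_l *)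
Definition grad d (L : nat) (Phi : 'M[R]_d) (W : nat -> 'M[R]_d) (l : nat)
  : 'M[R]_d :=
  (prodW W L l.+1)^T *m (prodW W L 1 - Phi) *m (prodW W l.-1 1)^T.

Definition gdstep d (L : nat) (Phi : 'M[R]_d) (eta : R) (W : nat -> 'M[R]_d)
  : nat -> 'M[R]_d := fun l => W l - eta *: grad L Phi W l.

Definition balD d (W : nat -> 'M[R]_d) (l : nat) : 'M[R]_d :=
  (W l.+1)^T *m W l.+1 - W l *m (W l)^T.

End Defs.

(* The gradients satisfy W_{l+1}^T grad_{l+1} = grad_l W_l^T, both sides being
   W_{L:l+1}^T (W_{L:1} - Phi) W_{l:1}^T.  Hence the first-order terms of D_l^+ - D_l
   cancel and D_l^+ - D_l = eta^2 (grad_{l+1}^T grad_{l+1} - grad_l grad_l^T), whose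
   spectral norm is at most eta^2 (|grad_{l+1}|^2 + |grad_l|^2).  Submultiplicativity
   and |W_{L:1} - Phi|_2 <= |W_{L:1} - Phi|_F = sqrt (2 R) give
   |grad_l| <= beta alpha^(L-2) sqrt (2 R) for l < L and |grad_L| <= alpha^(L-1) sqrt (2 R);
   the hypotheses on alpha, beta and phi bound their squares by 4 phi^2 R and 2 L phi^2 R. *)

From HB Require Import structures.
From mathcomp Require Import all_boot all_order all_algebra.
From mathcomp Require Import all_classical all_reals.
From mathcomp Require Import ring lra zify.
Import Order.TTheory GRing.Theory Num.Theory.
Set Implicit Arguments. Unset Strict Implicit. Unset Printing Implicit Defensive.
Local Open Scope ring_scope.

Section EuclideanNorm.
Variable R : realType.

Definition dot n (u v : 'cV[R]_n) : R := \sum_i u i 0 * v i 0.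

Lemma vnorm_ge0 n (u : 'cV[R]_n) : 0 <= vnorm u.
Proof. exact: sqrtr_ge0. Qed.

Lemma vnorm_sqr n (u : 'cV[R]_n) : vnorm u ^+ 2 = dot u u.
Proof.
rewrite sqr_sqrtr; last by apply: sumr_ge0 => i _; rewrite sqr_ge0.
by apply: eq_bigr => i _; rewrite expr2.
Qed.

Lemma vnorm_eq0 n (u : 'cV[R]_n) : vnorm u = 0 -> u = 0.
Proof.
move=> u0; apply/matrixP => i j; rewrite (ord1 j) mxE.
have /eqP : dot u u = 0 by rewrite -vnorm_sqr u0 expr0n.
rewrite psumr_eq0 => [/allP/(_ i (mem_index_enum _))|k _]; last first.
  by rewrite -expr2 sqr_ge0.
by rewrite mulf_eq0 orbb => /eqP.
Qed.

Lemma vnormZ n c (u : 'cV[R]_n) : vnorm (c *: u) = `|c| * vnorm u.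
Proof.
rewrite /vnorm -sqrtr_sqr -sqrtrM ?sqr_ge0 //; congr Num.sqrt.
by rewrite mulr_sumr; apply: eq_bigr => i _; rewrite !mxE exprMn.
Qed.

Lemma vnormN n (u : 'cV[R]_n) : vnorm (- u) = vnorm u.
Proof. by rewrite -scaleN1r vnormZ normrN normr1 mul1r. Qed.

Lemma vnorm0 n : vnorm (0 : 'cV[R]_n) = 0.
Proof. by rewrite -(scale0r 0) vnormZ normr0 mul0r. Qed.

Lemma dot_trmx m n (A : 'M[R]_(m, n)) (u : 'cV[R]_m) (v : 'cV[R]_n) :
  dot u (A *m v) = dot (A^T *m u) v.
Proof.
have dotE k (x y : 'cV[R]_k) : dot x y = (x^T *m y) 0 0.
  by rewrite mxE; apply: eq_bigr => i _; rewrite mxE.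
by rewrite !dotE trmx_mul trmxK mulmxA.
Qed.

Lemma dot_le_vnorm n (u v : 'cV[R]_n) : dot u v <= vnorm u * vnorm v.
Proof.
have := mulr_ge0 (vnorm_ge0 u) (vnorm_ge0 v).
rewrite le_eqVlt => /orP[/eqP ab0|ab_gt0].
  have -> : dot u v = 0.
    move/esym/eqP: ab0; rewrite mulf_eq0 => /orP[] /eqP/vnorm_eq0 ->;
      by rewrite /dot big1 // => i _; rewrite mxE ?mul0r ?mulr0.
  by rewrite -ab0.
set a := vnorm u in ab_gt0 *; set b := vnorm v in ab_gt0 *.
have expand : \sum_i (b * u i 0 - a * v i 0) ^+ 2 = 2 * (a * b) * (a * b - dot u v).
  transitivity (b ^+ 2 * dot u u - 2 * (a * b) * dot u v + a ^+ 2 * dot v v).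
    by rewrite /dot !mulr_sumr -sumrB -big_split /=; apply: eq_bigr => i _; ring.
  by rewrite -!vnorm_sqr -/a -/b; ring.
have : 0 <= 2 * (a * b) * (a * b - dot u v).
  by rewrite -expand; apply: sumr_ge0 => i _; exact: sqr_ge0.
by rewrite pmulr_rge0 ?subr_ge0 // mulr_gt0.
Qed.

Lemma dot_sqr_le n (u v : 'cV[R]_n) : dot u v ^+ 2 <= dot u u * dot v v.
Proof.
have dotNl : dot (- u) v = - dot u v.
  by rewrite /dot -sumrN; apply: eq_bigr => i _; rewrite mxE mulNr.
rewrite -!vnorm_sqr -exprMn -real_normK ?num_real //.
rewrite ler_sqr ?nnegrE ?mulr_ge0 ?vnorm_ge0 // ler_norml dot_le_vnorm andbT.
by rewrite lerNl -dotNl -(vnormN u) dot_le_vnorm.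
Qed.

Lemma vnormD n (u v : 'cV[R]_n) : vnorm (u + v) <= vnorm u + vnorm v.
Proof.
rewrite -ler_sqr ?nnegrE ?addr_ge0 ?vnorm_ge0 // sqrrD !vnorm_sqr.
have -> : dot (u + v) (u + v) = dot u u + 2 * dot u v + dot v v.
  by rewrite /dot !mulr_sumr -!big_split /=; apply: eq_bigr => i _; rewrite !mxE; ring.
by have := dot_le_vnorm u v; rewrite -mulr_natr; lra.
Qed.

End EuclideanNorm.

Section OperatorBound.
Variable R : realType.

Definition bounded_by m n (A : 'M[R]_(m, n)) (c : R) :=
  forall v, vnorm (A *m v) <= c * vnorm v.

Definition frobnorm m n (A : 'M[R]_(m, n)) : R := Num.sqrt (frob2 A).

Lemma frob2_ge0 m n (A : 'M[R]_(m, n)) : 0 <= frob2 A.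
Proof. by apply: sumr_ge0 => i _; apply: sumr_ge0 => j _; rewrite sqr_ge0. Qed.

Lemma le_bounded_by m n (A : 'M[R]_(m, n)) a b :
  a <= b -> bounded_by A a -> bounded_by A b.
Proof. by move=> ab hA v; apply: le_trans (hA v) _; rewrite ler_wpM2r ?vnorm_ge0. Qed.

Lemma bounded_by1 n : bounded_by (1%:M : 'M[R]_n) 1.
Proof. by move=> v; rewrite mul1mx mul1r. Qed.

Lemma bounded_byM m n p (A : 'M[R]_(m, n)) (B : 'M[R]_(n, p)) a b :
  0 <= a -> bounded_by A a -> bounded_by B b -> bounded_by (A *m B) (a * b).
Proof.
move=> a_ge0 hA hB v; rewrite -mulmxA -mulrA.
by apply: le_trans (hA _) _; rewrite ler_wpM2l.
Qed.

Lemma bounded_byB m n (A B : 'M[R]_(m, n)) a b :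
  bounded_by A a -> bounded_by B b -> bounded_by (A - B) (a + b).
Proof.
move=> hA hB v; rewrite mulmxBl mulrDl.
by apply: le_trans (vnormD _ _) _; rewrite vnormN lerD.
Qed.

Lemma bounded_byZ m n (A : 'M[R]_(m, n)) a c :
  0 <= c -> bounded_by A a -> bounded_by (c *: A) (c * a).
Proof.
move=> c_ge0 hA v; rewrite -scalemxAl vnormZ ger0_norm // -mulrA.
by rewrite ler_wpM2l.
Qed.

Lemma bounded_by_trmx m n (A : 'M[R]_(m, n)) a :
  0 <= a -> bounded_by A a -> bounded_by A^T a.
Proof.
move=> a_ge0 hA v; set x := vnorm (A^T *m v).
have x_sqr : x * x <= a * vnorm v * x.
  rewrite -expr2 vnorm_sqr -dot_trmx.
  apply: le_trans (dot_le_vnorm _ _) _.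
  by rewrite [a * _]mulrC -mulrA ler_wpM2l ?vnorm_ge0 //; exact: hA.
have := vnorm_ge0 (A^T *m v); rewrite -/x le_eqVlt => /orP[/eqP x0|x_gt0].
  by rewrite -x0 mulr_ge0 ?vnorm_ge0.
by rewrite -(ler_pM2r x_gt0).
Qed.

Lemma bounded_by_frobnorm m n (A : 'M[R]_(m, n)) : bounded_by A (frobnorm A).
Proof.
move=> v; rewrite -ler_sqr ?nnegrE ?mulr_ge0 ?vnorm_ge0 ?sqrtr_ge0 //.
rewrite exprMn !vnorm_sqr sqr_sqrtr ?frob2_ge0 // /frob2 mulr_suml.
apply: ler_sum => i _.
have -> : (A *m v) i 0 = dot (row i A)^T v.
  by rewrite mxE; apply: eq_bigr => j _; rewrite !mxE.
rewrite -expr2; apply: le_trans (dot_sqr_le _ _) _.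
by rewrite /dot; under eq_bigr do rewrite !mxE -expr2.
Qed.

Lemma bounded_by_specnorm m n (A : 'M[R]_(m, n)) : bounded_by A (specnorm A).
Proof.
move=> v; have [v0|v_neq0] := eqVneq (vnorm v) 0.
  by rewrite (vnorm_eq0 v0) mulmx0 !vnorm0 mulr0.
have v_gt0 : 0 < vnorm v by rewrite lt_def v_neq0 vnorm_ge0.
set w := (vnorm v)^-1 *: v.
have w1 : vnorm w = 1 by rewrite vnormZ ger0_norm ?invr_ge0 ?vnorm_ge0 // mulVf.
have -> : A *m v = vnorm v *: (A *m w).
  by rewrite -scalemxAr scalerA divff ?scale1r.
rewrite vnormZ ger0_norm ?vnorm_ge0 // mulrC ler_wpM2r ?vnorm_ge0 //.
apply: ub_le_sup; last by exists w.
exists (frobnorm A) => _ [u /= u1 <-].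
by have := bounded_by_frobnorm A u; rewrite u1 mulr1.
Qed.

Lemma specnorm_le m n (A : 'M[R]_(m, n)) c :
  0 <= c -> bounded_by A c -> specnorm A <= c.
Proof.
move=> c_ge0 hA; rewrite /specnorm.
set S := (X in sup X).
have [[x Sx]|S0] := pselect (exists x, S x); last first.
  suff -> : S = set0 by rewrite sup0.
  by apply/seteqP; split => // x Sx; apply: S0; exists x.
apply: ge_sup; first by exists x.
by move=> _ [v /= v1 <-]; have := hA v; rewrite v1 mulr1.
Qed.

End OperatorBound.

Section Products.
Variables (R : realType) (d : nat) (W : nat -> 'M[R]_d).

Let foldr_mulmx s (X : 'M[R]_d) :
  foldr (fun i acc => W i *m acc) X s = foldr (fun i acc => W i *m acc) 1%:M s *m X.
Proof. by elim: s => [|x s IH] /=; rewrite ?mul1mx // IH mulmxA. Qed.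

Lemma prodW_low hi lo : (lo <= hi)%N -> prodW W hi lo = prodW W hi lo.+1 *m W lo.
Proof.
rewrite /prodW => lo_le_hi; have -> : (hi.+1 - lo = (hi.+1 - lo.+1).+1)%N by lia.
by rewrite /= rev_cons foldr_rcons foldr_mulmx mulmx1.
Qed.

Lemma prodW_high hi lo : (lo <= hi)%N -> (0 < hi)%N -> prodW W hi lo = W hi *m prodW W hi.-1 lo.
Proof.
rewrite /prodW => lo_le_hi hi_gt0.
have -> : (hi.+1 - lo = (hi.-1.+1 - lo) + 1)%N by lia.
rewrite iotaD rev_cat /=.
by have -> : (lo + (hi.-1.+1 - lo) = hi)%N by lia.
Qed.

Lemma prodW_empty hi lo : (hi < lo)%N -> prodW W hi lo = 1%:M.
Proof. by rewrite /prodW => hi_lt_lo; have -> : (hi.+1 - lo = 0)%N by lia. Qed.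

Lemma bounded_by_prodW hi lo a : 0 <= a ->
  (forall i, (lo <= i <= hi)%N -> bounded_by (W i) a) ->
  bounded_by (prodW W hi lo) (a ^+ (hi.+1 - lo)).
Proof.
move=> a_ge0; have [k k_eq] : exists k, (hi.+1 - lo)%N = k by eexists.
rewrite k_eq; elim: k lo k_eq => [|k IH] lo k_eq hW.
  by rewrite prodW_empty; [exact: bounded_by1 | lia].
rewrite prodW_low ?exprSr; last by lia.
apply: bounded_byM; first exact: exprn_ge0.
  by apply: IH => [|i hi_i]; [lia | apply: hW; lia].
by apply: hW; lia.
Qed.

End Products.

Section GradientBounds.
Variables (R : realType) (d L : nat) (Phi : 'M[R]_d) (W : nat -> 'M[R]_d) (alpha : R).
Hypothesis alpha_ge0 : 0 <= alpha.
Hypothesis W_bounded : forall l, (0 < l < L)%N -> bounded_by (W l) alpha.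

Let e := frobnorm (prodW W L 1 - Phi).

Lemma bounded_by_prodW_below l : (l <= L)%N -> bounded_by (prodW W l.-1 1) (alpha ^+ l.-1).
Proof.
move=> hl; have := @bounded_by_prodW _ _ W l.-1 1 alpha alpha_ge0.
by rewrite subn1 /=; apply=> i hi; apply: W_bounded; lia.
Qed.

Lemma bounded_by_grad_last : bounded_by (grad L Phi W L) (alpha ^+ (L - 1) * e).
Proof.
rewrite /grad prodW_empty // trmx1 mul1mx subn1 mulrC.
apply: bounded_byM; [exact: sqrtr_ge0 | exact: bounded_by_frobnorm |].
by apply: bounded_by_trmx; [rewrite exprn_ge0 | exact: bounded_by_prodW_below].
Qed.

Variable beta : R.
Hypothesis beta_ge0 : 0 <= beta.
Hypothesis WL_bounded : bounded_by (W L) beta.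

Lemma bounded_by_prodW_above l : (l < L)%N ->
  bounded_by (prodW W L l.+1) (beta * alpha ^+ (L - l.+1)).
Proof.
move=> hl; rewrite (@prodW_high _ _ W L l.+1); [|lia|lia].
apply: bounded_byM => //; have := @bounded_by_prodW _ _ W L.-1 l.+1 alpha alpha_ge0.
by rewrite prednK; [apply=> i hi; apply: W_bounded; lia | lia].
Qed.

Lemma bounded_by_grad l : (0 < l < L)%N ->
  bounded_by (grad L Phi W l) (beta * alpha ^+ (L - 2) * e).
Proof.
move=> hl; have e_ge0 : 0 <= e by apply: sqrtr_ge0.
have -> : beta * alpha ^+ (L - 2) * e = beta * alpha ^+ (L - l.+1) * e * alpha ^+ l.-1.
  by rewrite [in LHS](_ : L - 2 = (L - l.+1) + l.-1)%N ?exprD; [ring | lia].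
apply: bounded_byM; first by rewrite !mulr_ge0 ?exprn_ge0.
  apply: bounded_byM; first by rewrite mulr_ge0 ?exprn_ge0.
    by apply: bounded_by_trmx; [rewrite mulr_ge0 ?exprn_ge0 | apply: bounded_by_prodW_above; lia].
  exact: bounded_by_frobnorm.
by apply: bounded_by_trmx; [rewrite exprn_ge0 | apply: bounded_by_prodW_below; lia].
Qed.

End GradientBounds.

Section Balance.
Variable R : realType.

Lemma balance_step m n p (X G1 : 'M[R]_(m, n)) (Y G0 : 'M[R]_(n, p)) eta :
  X^T *m G1 = G0 *m Y^T ->
  (X - eta *: G1)^T *m (X - eta *: G1) - (Y - eta *: G0) *m (Y - eta *: G0)^T
    - (X^T *m X - Y *m Y^T) = eta ^+ 2 *: (G1^T *m G1 - G0 *m G0^T).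
Proof.
move=> XG1; have G1X : G1^T *m X = Y *m G0^T by rewrite -[X]trmxK -trmx_mul XG1 trmx_mul trmxK.
rewrite !linearB /= !linearZ /= !scalerN !mulmxDl !mulNmx -!scalemxAl XG1 G1X.
apply/matrixP => i j; rewrite !mxE; ring.
Qed.

Variables (d L : nat) (Phi : 'M[R]_d) (W : nat -> 'M[R]_d).

Lemma trmx_mul_grad l : (0 < l < L)%N ->
  (W l.+1)^T *m grad L Phi W l.+1 = grad L Phi W l *m (W l)^T.
Proof.
move=> hl; rewrite /grad /= !mulmxA -trmx_mul -prodW_low; last lia.
by rewrite -!mulmxA -trmx_mul -prodW_high //; lia.
Qed.

Lemma balD_gdstep_sub eta l : (0 < l < L)%N ->
  balD (gdstep L Phi eta W) l - balD W l =
  eta ^+ 2 *: ((grad L Phi W l.+1)^T *m grad L Phi W l.+1 - grad L Phi W l *m (grad L Phi W l)^T).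
Proof. by move=> hl; apply: balance_step; exact: trmx_mul_grad. Qed.

Lemma specnorm_balD_gdstep_sub eta l g1 g0 : (0 < l < L)%N -> 0 <= g1 -> 0 <= g0 ->
  bounded_by (grad L Phi W l.+1) g1 -> bounded_by (grad L Phi W l) g0 ->
  specnorm (balD (gdstep L Phi eta W) l - balD W l) <= eta ^+ 2 * (g1 ^+ 2 + g0 ^+ 2).
Proof.
move=> hl g1_ge0 g0_ge0 h1 h0; rewrite balD_gdstep_sub //.
apply: specnorm_le; first by rewrite mulr_ge0 ?addr_ge0 ?sqr_ge0.
apply: bounded_byZ; first exact: sqr_ge0.
by rewrite !expr2; apply: bounded_byB; apply: bounded_byM => //; exact: bounded_by_trmx.
Qed.

End Balance.

Lemma frobnorm_risk (R : realType) d L (Phi : 'M[R]_d) W :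
  frobnorm (prodW W L 1 - Phi) ^+ 2 = 2 * risk L Phi W.
Proof. by rewrite sqr_sqrtr ?frob2_ge0 // /risk mulrC divfK ?pnatr_eq0. Qed.

Theorem lemma9 (R : realType) (d L : nat) (Phi : 'M[R]_d)
  (W : nat -> 'M[R]_d) (alpha beta phi eta : R) :
  (1 <= d)%N -> (2 <= L)%N ->
  0 <= alpha -> 0 <= beta -> 0 < phi ->
  (forall l : nat, (1 <= l <= L - 1)%N -> specnorm (W l) <= alpha) ->
  specnorm (W L) <= beta ->
  1 <= alpha ^+ (2 * (L - 1)) ->
  alpha ^+ (2 * (L - 1)) < L%:R * phi ^+ 2 ->
  alpha ^+ (2 * (L - 1)) * beta ^+ 2 < 2 * phi ^+ 2 ->
  0 < eta ->
  (forall l : nat, (1 <= l <= L - 2)%N ->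
     specnorm (balD (gdstep L Phi eta W) l - balD W l)
       <= 8 * eta ^+ 2 * phi ^+ 2 * risk L Phi W) /\
  specnorm (balD (gdstep L Phi eta W) (L - 1) - balD W (L - 1))
    <= 2 * eta ^+ 2 * (L + 2)%:R * phi ^+ 2 * risk L Phi W.
Proof.
move=> _; case: L => [|[|n]] // _; rewrite !subSS !subn0.
move=> alpha_ge0 beta_ge0 _ W_le WL_le alpha_pow_ge1 alpha_pow_lt beta_lt _.
have W_bnd l : (0 < l < n.+2)%N -> bounded_by (W l) alpha.
  by move=> hl; apply: le_bounded_by (W_le l _) (bounded_by_specnorm _); lia.
have WL_bnd := le_bounded_by WL_le (bounded_by_specnorm (W n.+2)).
have grad_bnd := bounded_by_grad Phi alpha_ge0 W_bnd beta_ge0 WL_bnd.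
have grad_last_bnd := bounded_by_grad_last Phi alpha_ge0 W_bnd.
rewrite !subSS !subn0 in grad_bnd grad_last_bnd.
have e_sqr := @frobnorm_risk _ _ n.+2 Phi W.
set e := frobnorm _ in grad_bnd grad_last_bnd e_sqr.
set r := risk n.+2 Phi W in e_sqr *.
have e_ge0 : 0 <= e by apply: sqrtr_ge0.
have r2_ge0 : 0 <= 2 * r by rewrite -e_sqr sqr_ge0.
have alpha_ge1 : 1 <= alpha by move: alpha_pow_ge1; rewrite expr_ge1.
rewrite mulnC exprM in alpha_pow_lt beta_lt.
have mid_sqr : (beta * alpha ^+ n * e) ^+ 2 <= 2 * phi ^+ 2 * (2 * r).
  rewrite exprMn e_sqr ler_wpM2r //; apply: le_trans (ltW beta_lt).
  by rewrite exprMn mulrC ler_wpM2r ?sqr_ge0 // lerXn2r ?nnegrE ?exprn_ge0 // ler_weXn2l.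
have last_sqr : (alpha ^+ n.+1 * e) ^+ 2 <= n.+2%:R * phi ^+ 2 * (2 * r).
  by rewrite exprMn e_sqr ler_wpM2r // ltW.
have mid_ge0 : 0 <= beta * alpha ^+ n * e by rewrite !mulr_ge0 ?exprn_ge0.
have last_ge0 : 0 <= alpha ^+ n.+1 * e by rewrite mulr_ge0 ?exprn_ge0.
split=> [l /andP[l_gt0 l_le_n]|].
  have hl0 : (0 < l < n.+2)%N by rewrite l_gt0 ltnS leqW.
  have hl1 : (0 < l.+1 < n.+2)%N by rewrite ltnS ltnS.
  apply: le_trans (specnorm_balD_gdstep_sub eta hl0 mid_ge0 mid_ge0
    (grad_bnd _ hl1) (grad_bnd _ hl0)) _.
  rewrite (_ : 8 * eta ^+ 2 * phi ^+ 2 * r =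
    eta ^+ 2 * (2 * phi ^+ 2 * (2 * r) + 2 * phi ^+ 2 * (2 * r))); last by ring.
  by rewrite ler_wpM2l ?sqr_ge0 ?lerD.
have hn : (0 < n.+1 < n.+2)%N by rewrite ltnSn.
apply: le_trans (specnorm_balD_gdstep_sub eta hn last_ge0 mid_ge0
  grad_last_bnd (grad_bnd _ hn)) _.
rewrite (_ : 2 * eta ^+ 2 * (n.+2 + 2)%:R * phi ^+ 2 * r =
  eta ^+ 2 * (n.+2%:R * phi ^+ 2 * (2 * r) + 2 * phi ^+ 2 * (2 * r))); last by rewrite natrD; ring.
by rewrite ler_wpM2l ?sqr_ge0 ?lerD.
Qed.
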